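(* Let $a\in\mathbb{Z}$ and $b\in\mathbb{Z}_{\le0}$. Expand $q^{-\frac12(a-b)}X_4E_{(a,b)}-E_{(a-1,b-1)}$ as a $\mathbb{Z}[q^{\pm\frac12}]$-linear combination of standard monomials. Then every standard monomial $E_{(c,d)}$ occurring with nonzero coefficient satisfies: $c\ge a-1$ if $a>0$ and $c\ge a$ if $a\le0$; moreover $c\le a-b$ if $d\ge0$, and $c-d\le a-b$ if $d<0$.
   Context: Let $\mathcal{T}$ be the quantum torus over $\mathbb{Z}[q^{\pm\frac12}]$ generated by $X_1^{\pm1},X_2^{\pm1}$ with $X_1X_2=qX_2X_1$, with skew field of fractions $\mathcal{F}$. Define $X_k\in\mathcal{F}$ ($k\in\mathbb{Z}$) by $X_{k-1}X_{k+1}=q^{\frac12}X_k+1$ for $k$ odd and $X_{k-1}X_{k+1}=q^2X_k^4+1$ for $k$ even; $\mathcal{A}_q(1,4)$ is the $\mathbb{Z}[q^{\pm\frac12}]$-subalgebra of $\mathcal{F}$ generated by all $X_k$. For $x\in\mathbb{Z}$, $[x]_+=\max(x,0)$. Standard monomials: $E_{(a,b)}=q^{-\frac12ab}X_3^{[-a]_+}X_1^{[a]_+}X_2^{[b]_+}X_0^{[-b]_+}$ for $(a,b)\in\mathbb{Z}^2$; they form a $\mathbb{Z}[q^{\pm\frac12}]$-basis of $\mathcal{A}_q(1,4)$. *)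

(* An explicit model of the quantum torus T over Z[q^{±1/2}]. *)
From mathcomp Require Import all_boot all_order all_algebra.
Set Implicit Arguments. Unset Strict Implicit. Unset Printing Implicit Defensive.
Import Order.TTheory GRing.Theory Num.Theory.
Local Open Scope ring_scope.

(* Write t := q^{1/2}.  A Z-basis of T is { t^n X1^a X2^b : n a b in Z }
   (ordered monomials X1^a X2^b).  The triple (n,a,b) encodes t^n X1^a X2^b.
   Since X2^b X1^c = q^{-bc} X1^c X2^b, the product of basis elements is
   (n,a,b)*(m,c,d) = (n+m-2bc, a+c, b+d).  Hence T is the group ring over Z of
   this (Heisenberg-type) group law on Z^3, with t = (1,0,0) central. *)
Definition tmon := (int * int * int)%type.

Definition tmon_mul (x y : tmon) : tmon :=
  let: (n, a, b) := x in let: (m, c, d) := y in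
  (n + m - 2 * b * c, a + c, b + d).

(* Elements of T: finite formal Z-linear combinations of basis monomials,
   given as lists of (coefficient, monomial); two lists represent the same
   element iff they have the same coefficient function [qcoef]. *)
Definition qtor := seq (int * tmon).

Definition qcoef (x : qtor) (m : tmon) : int :=
  \sum_(p <- x | p.2 == m) p.1.

Definition qeq (x y : qtor) : Prop := forall m, qcoef x m = qcoef y m.

Definition qadd (x y : qtor) : qtor := x ++ y.
Definition qopp (x : qtor) : qtor := [seq (- p.1, p.2) | p <- x].
Definition qmul (x y : qtor) : qtor :=
  [seq (p.1 * r.1, tmon_mul p.2 r.2) | p <- x, r <- y].
Definition qmon (m : tmon) : qtor := [:: (1, m)].
Definition qone : qtor := qmon (0, 0, 0).
Definition qpow (x : qtor) (k : nat) : qtor := iter k (qmul x) qone.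

(* t^n = q^{n/2} *)
Definition qhalf (n : int) : qtor := qmon (n, 0, 0).
Definition X1 : qtor := qmon (0, 1, 0).
Definition X2 : qtor := qmon (0, 0, 1).
Definition X1inv : qtor := qmon (0, -1, 0).
Definition X2inv : qtor := qmon (0, 0, -1).

(* The cluster variables X0, X3, X4 (determined in the skew field F by the
   exchange relations, and lying in T):
   X0 X2 = q^{1/2} X1 + 1           (k = 1 odd)
   X1 X3 = q^2 X2^4 + 1             (k = 2 even)
   X2 X4 = q^{1/2} X3 + 1           (k = 3 odd)                            *)
Definition X0 : qtor := qmul (qadd (qmul (qhalf 1) X1) qone) X2inv.
Definition X3 : qtor := qmul X1inv (qadd (qmul (qhalf 4) (qpow X2 4)) qone).
Definition X4 : qtor := qmul X2inv (qadd (qmul (qhalf 1) X3) qone).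

Definition posp (x : int) : nat := match x with Posz n => n | Negz _ => 0%N end.

Definition stdmon (a b : int) : qtor :=
  qmul (qhalf (- (a * b)))
    (qmul (qpow X3 (posp (- a)))
      (qmul (qpow X1 (posp a))
        (qmul (qpow X2 (posp b)) (qpow X0 (posp (- b)))))).

(* A Z[q^{±1/2}]-linear combination of standard monomials, given as a list of
   entries ((c,d),(k,z)) standing for  z q^{k/2} E_(c,d). *)
Definition stdcomb := seq ((int * int) * (int * int)).

Definition stdcomb_val (L : stdcomb) : qtor :=
  flatten [seq qmul [:: (e.2.2, (e.2.1, 0, 0))] (stdmon e.1.1 e.1.2) | e <- L].

Definition stdcomb_coef (L : stdcomb) (cd : int * int) (k : int) : int :=
  \sum_(e <- L | (e.1 == cd) && (e.2.1 == k)) e.2.2.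

Definition stdcomb_occurs (L : stdcomb) (cd : int * int) : Prop :=
  exists k, stdcomb_coef L cd k != 0.

(* Grade the quantum torus by the exponents (i, j) of X1 and X2.  Every term of
   E_(c,d) satisfies c <= i <= c + [-d]_+ and j >= d, and each of the two corners
   (c, d) and (c + [-d]_+, d) of this region carries exactly one monomial of E_(c,d),
   with coefficient 1.  Among the E_(c,d) occurring in the expansion, pick one whose
   corner is extremal (lowest, resp. highest, i, and then lowest j): no other
   occurring E_(c',d') reaches that corner, so the corner term survives and lies in
   the support of q^{-(a-b)/2} X4 E_(a,b) - E_(a-1,b-1).  That support satisfies
   a - 1 <= i <= a - b, and for a <= 0 its part with i = a - 1 cancels: since X0 and
   X4 contribute only X2^{-1} and q^{1/2} X2^{-1} X3 in lowest X1-degree, the lowest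
   parts of both terms equal q^{-(a-1)(b-1)/2} X3^{1-a} X2^{b-1}. *)

From mathcomp Require Import all_boot all_order all_algebra.
From mathcomp Require Import zify ring.
Set Implicit Arguments. Unset Strict Implicit. Unset Printing Implicit Defensive.
Import Order.TTheory GRing.Theory Num.Theory.
Local Open Scope ring_scope.

Lemma big_partition_seq (R : nmodType) (T K : eqType) (s : seq T) (key : T -> K)
    (U : seq K) (F : T -> R) :
  uniq U -> (forall e, e \in s -> key e \in U) ->
  \sum_(e <- s) F e = \sum_(k <- U) \sum_(e <- s | key e == k) F e.
Proof.
move=> uU sU; under [RHS]eq_bigr do rewrite big_mkcond.
rewrite exchange_big /=; apply: eq_big_seq => e es.
rewrite (bigD1_seq (key e)) ?sU //= eqxx big1 ?addr0 // => k.
by rewrite eq_sym => /negbTE->.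
Qed.

Lemma seq_argmin (T : eqType) d (O : orderType d) (f : T -> O) (s : seq T) x :
  x \in s -> exists2 y, y \in s & forall z, z \in s -> (f y <= f z)%O.
Proof.
elim: s x => // a s IH x _; case: s IH => [|b s] IH.
  by exists a => [|z]; rewrite ?mem_head // inE => /eqP->.
have [y ys ymin] := IH b (mem_head _ _).
case: (leP (f a) (f y)) => [ay|ya].
  exists a => [|z]; rewrite ?mem_head // inE => /orP[/eqP-> //|/ymin].
  exact: le_trans.
exists y => [|z]; first by rewrite inE ys orbT.
by rewrite inE => /orP[/eqP->|/ymin //]; apply: ltW.
Qed.

Definition deg1 (u : tmon) : int := u.1.2.
Definition deg2 (u : tmon) : int := u.2.

Lemma deg1_mul u v : deg1 (tmon_mul u v) = deg1 u + deg1 v.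
Proof. by case: u => [[n a] b]; case: v => [[m c] d]. Qed.

Lemma deg2_mul u v : deg2 (tmon_mul u v) = deg2 u + deg2 v.
Proof. by case: u => [[n a] b]; case: v => [[m c] d]. Qed.

Lemma tmon_mulA u v w : tmon_mul (tmon_mul u v) w = tmon_mul u (tmon_mul v w).
Proof.
case: u => [[n a] b]; case: v => [[m c] d]; case: w => [[k e] f] /=.
by congr (_, _, _); ring.
Qed.

Lemma qcoef_cat x y m : qcoef (x ++ y) m = qcoef x m + qcoef y m.
Proof. by rewrite /qcoef big_cat. Qed.

Lemma qcoef_opp x m : qcoef (qopp x) m = - qcoef x m.
Proof. by rewrite /qcoef big_map sumrN. Qed.

Lemma qcoef_neq0 x m : qcoef x m != 0 -> exists2 p, p \in x & p.2 = m.
Proof.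
elim: x => [|p x IH]; first by rewrite /qcoef big_nil eqxx.
rewrite /qcoef big_cons; case: (p.2 =P m) => [<- _|_]; first by exists p; rewrite ?mem_head.
by case/IH => q qx <-; exists q; rewrite // inE qx orbT.
Qed.

Lemma qcoef_shift z k x n i j :
  qcoef (qmul [:: (z, (k, 0, 0))] x) (n, i, j) = z * qcoef x (n - k, i, j).
Proof.
rewrite /qcoef /qmul allpairs1l big_map big_distrr /=.
apply: eq_bigl => -[w [[m i'] j']] /=; rewrite !xpair_eqE mul0r subr0 !add0r.
by congr (_ && _ && _); apply/eqP/eqP; lia.
Qed.

(* [orient false] reverses the order on X1-degrees, so that lower ([lo = true])
   and upper ([lo = false]) bounds are handled alike. *)
Definition orient (lo : bool) (x : int) : int := if lo then x else - x.

Lemma orientD lo x y : orient lo (x + y) = orient lo x + orient lo y.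
Proof. by case: lo => //=; rewrite opprD. Qed.

Lemma extremal_sum_eq lo e1 e2 x1 x2 :
  orient lo e1 <= orient lo x1 -> orient lo e2 <= orient lo x2 ->
  (x1 + x2 == e1 + e2) = (x1 == e1) && (x2 == e2).
Proof.
case: lo => /= h1 h2; apply/idP/idP => [/eqP h|/andP[/eqP-> /eqP->]] //;
  by apply/andP; split; apply/eqP; lia.
Qed.

Definition qbounded (lo : bool) (x : qtor) (e j : int) : bool :=
  all (fun p => (orient lo e <= orient lo (deg1 p.2)) && (j <= deg2 p.2)) x.

Definition qcount (x : qtor) (i j : int) : nat :=
  count (fun p => (deg1 p.2 == i) && (deg2 p.2 == j)) x.

Definition qcorner (lo : bool) (x : qtor) (e j : int) : Prop :=
  [/\ all (fun p => p.1 == 1) x, qbounded lo x e j & qcount x e j = 1%N].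

Lemma qbounded_mul lo x y e1 j1 e2 j2 :
  qbounded lo x e1 j1 -> qbounded lo y e2 j2 ->
  qbounded lo (qmul x y) (e1 + e2) (j1 + j2).
Proof.
move=> /allP hx /allP hy; apply/allP => q /allpairsP [[p r] [/= px ry ->]] /=.
case/andP: (hx p px) => pe pj; case/andP: (hy r ry) => re rj.
by rewrite deg1_mul deg2_mul !orientD; apply/andP; split; apply: lerD.
Qed.

Lemma qbounded_le lo x e j e' j' :
  qbounded lo x e j -> orient lo e' <= orient lo e -> j' <= j -> qbounded lo x e' j'.
Proof.
move=> /allP hx le_e le_j; apply/allP => p /hx /andP[pe pj].
by rewrite (le_trans le_e pe) (le_trans le_j pj).
Qed.

Lemma qbounded_cat lo x y e j :
  qbounded lo x e j -> qbounded lo y e j -> qbounded lo (x ++ y) e j.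
Proof. by rewrite /qbounded all_cat => -> ->. Qed.

Lemma qbounded_opp lo x e j : qbounded lo x e j -> qbounded lo (qopp x) e j.
Proof. by rewrite /qbounded all_map. Qed.

Lemma qcount_mul lo x y e1 j1 e2 j2 :
  qbounded lo x e1 j1 -> qbounded lo y e2 j2 ->
  qcount (qmul x y) (e1 + e2) (j1 + j2) = (qcount x e1 j1 * qcount y e2 j2)%N.
Proof.
elim: x => [|p x IH] //= /andP[/andP[pe pj] hx] hy.
rewrite /qcount /qmul allpairs_cons count_cat count_map -/(qcount _ _ _) IH // mulnDl.
congr (_ + _)%N.
rewrite (@eq_in_count _ _ (fun r => ((deg1 p.2 == e1) && (deg2 p.2 == j1)) &&
                                   ((deg1 r.2 == e2) && (deg2 r.2 == j2)))); last first.
  move=> r /(allP hy) /andP[re rj] /=.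
  rewrite deg1_mul deg2_mul (extremal_sum_eq pe re).
  by rewrite (extremal_sum_eq (lo := true) pj rj) andbACA.
by case: (_ && _) => /=; rewrite ?mul1n ?count_pred0.
Qed.

Lemma qcorner_mul lo x y e1 j1 e2 j2 :
  qcorner lo x e1 j1 -> qcorner lo y e2 j2 -> qcorner lo (qmul x y) (e1 + e2) (j1 + j2).
Proof.
case=> /allP x1 xb xc [/allP y1 yb yc]; split; last by rewrite (qcount_mul xb yb) xc yc.
- apply/allP => q /allpairsP [[p r] [/= px ry ->]] /=.
  by rewrite (eqP (x1 p px)) (eqP (y1 r ry)).
- exact: qbounded_mul.
Qed.

Lemma qcorner_pow lo x e j k : qcorner lo x e j -> qcorner lo (qpow x k) (e *+ k) (j *+ k).
Proof.
move=> hx; elim: k => [|k IH]; first by split; case: (lo).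
by rewrite !mulrS; apply: qcorner_mul.
Qed.

Lemma qcorner_coef lo x e j : qcorner lo x e j ->
  exists n0, forall n, qcoef x (n, e, j) = (n == n0)%:R.
Proof.
case=> /allP x1 _ /eqP; rewrite /qcount -size_filter.
case E : filter => [|p [|]] // _.
have : p \in filter (fun p => (deg1 p.2 == e) && (deg2 p.2 == j)) x by rewrite E mem_head.
rewrite mem_filter => /andP[/andP[/eqP pe /eqP pj] /x1 /eqP p1]; exists p.2.1.1 => n.
rewrite /qcoef (eq_bigl (fun q => ((deg1 q.2 == e) && (deg2 q.2 == j)) && (q.2 == (n, e, j)))).
  rewrite -big_filter_cond E big_mkcond big_seq1 p1.
  case: p.2 pe pj => [[n' e'] j']; rewrite /deg1 /deg2 /= => -> ->.
  by rewrite !xpair_eqE !eqxx !andbT eq_sym; case: (n == n').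
by move=> q /=; case: eqP => [->|]; rewrite ?andbF // /deg1 /deg2 /= !eqxx.
Qed.

Lemma qcorner_qhalf lo s : qcorner lo (qhalf s) 0 0. Proof. by case: lo. Qed.
Lemma qcorner_X1 lo : qcorner lo X1 1 0. Proof. by case: lo; split; vm_compute. Qed.
Lemma qcorner_X2 lo : qcorner lo X2 0 1. Proof. by case: lo; split; vm_compute. Qed.
Lemma qcorner_X3 lo : qcorner lo X3 (-1) 0. Proof. by case: lo; split; vm_compute. Qed.
Lemma qcorner_X0 lo : qcorner lo X0 (if lo then 0 else 1) (-1).
Proof. by case: lo; split; vm_compute. Qed.

Lemma qbounded_X4 lo : qbounded lo X4 (if lo then -1 else 0) (-1).
Proof. by case: lo; vm_compute. Qed.

Lemma posp_cases x : ((posp x)%:Z = x /\ 0 <= x) \/ ((posp x)%:Z = 0 /\ x < 0).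
Proof. by case: x => n; [left | right]. Qed.

Lemma posp_neg (n : nat) : posp (- n%:Z) = 0%N.
Proof. by case: n. Qed.

Definition corner (lo : bool) (c d : int) : int :=
  if lo then c else c + (posp (- d))%:Z.

Lemma qcorner_stdmon lo c d : qcorner lo (stdmon c d) (corner lo c d) d.
Proof.
have := qcorner_mul (qcorner_qhalf lo (- (c * d)))
  (qcorner_mul (qcorner_pow (posp (- c)) (qcorner_X3 lo))
  (qcorner_mul (qcorner_pow (posp c) (qcorner_X1 lo))
  (qcorner_mul (qcorner_pow (posp d) (qcorner_X2 lo))
    (qcorner_pow (posp (- d)) (qcorner_X0 lo))))).
rewrite -/(stdmon c d) !mul0rn !mulNrn !add0r !natz.
have -> : (posp d)%:Z - (posp (- d))%:Z = d by move: (posp_cases d) (posp_cases (- d)); lia.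
have -> // : - (posp (- c))%:Z + ((posp c)%:Z + (if lo then 0 else 1) *+ posp (- d))
  = corner lo c d.
rewrite /corner; case: lo; rewrite ?mul0rn ?natz.
all: by move: (posp_cases c) (posp_cases (- c)); lia.
Qed.

Definition qlmul (u : tmon) (x : qtor) : qtor := [seq (p.1, tmon_mul u p.2) | p <- x].
Definition qrmul (x : qtor) (u : tmon) : qtor := [seq (p.1, tmon_mul p.2 u) | p <- x].

Definition qhomog (x : qtor) (e : int) : bool := all (fun p => deg1 p.2 == e) x.

Lemma qmul_monl u x : qmul (qmon u) x = qlmul u x.
Proof. by rewrite /qmul allpairs1l; apply: eq_map => p; rewrite mul1r. Qed.

Lemma qmul_monr x u : qmul x (qmon u) = qrmul x u.
Proof. by rewrite /qmul allpairs1r; apply: eq_map => p; rewrite mulr1. Qed.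

Lemma qmul1 x : qmul qone x = x.
Proof.
rewrite qmul_monl -[RHS]map_id; apply: eq_map => -[z [[n i] j]] /=.
by congr (_, (_, _, _)); ring.
Qed.

Lemma qlmulAl u x y : qmul (qlmul u x) y = qlmul u (qmul x y).
Proof.
rewrite /qmul /qlmul allpairs_mapl map_allpairs.
by apply: eq_allpairs => p r; rewrite tmon_mulA.
Qed.

Lemma qrmulAr x y u : qmul x (qrmul y u) = qrmul (qmul x y) u.
Proof.
rewrite /qmul /qrmul allpairs_mapr map_allpairs.
by apply: eq_allpairs => p r; rewrite tmon_mulA.
Qed.

(* X1^e X2^k = q^(ek) X2^k X1^e *)
Lemma qmul_qlmul_homog x y e n k : qhomog x e ->
  qmul x (qlmul (n, 0, k) y) = qlmul (n + 2 * k * e, 0, k) (qmul x y).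
Proof.
move=> /allP hx; rewrite /qmul /qlmul allpairs_mapr map_allpairs.
apply/eq_in_allpairs => -[z [[m i] j]] [w [[m' i'] j']] /hx /eqP /= hi _.
by rewrite /deg1 /= in hi; rewrite hi; congr (_, (_, _, _)); ring.
Qed.

Lemma qhomog_mul x y e1 e2 : qhomog x e1 -> qhomog y e2 -> qhomog (qmul x y) (e1 + e2).
Proof.
move=> /allP hx /allP hy; apply/allP => q /allpairsP [[p r] [/= px ry ->]] /=.
by rewrite deg1_mul (eqP (hx p px)) (eqP (hy r ry)).
Qed.

Lemma qhomog_pow x e k : qhomog x e -> qhomog (qpow x k) (e *+ k).
Proof.
by move=> hx; elim: k => [|k IH] //; rewrite mulrS; apply: qhomog_mul.
Qed.

Lemma qhomog_X1 : qhomog X1 1. Proof. by []. Qed.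
Lemma qhomog_X2 : qhomog X2 0. Proof. by []. Qed.
Lemma qhomog_X3 : qhomog X3 (-1). Proof. by vm_compute. Qed.

Lemma qpow_X2inv n : qpow X2inv n = qmon (0, 0, - n%:Z).
Proof.
elim: n => [|n IH] //=; rewrite IH /X2inv qmul_monl /=.
by congr [:: (_, (_, _, _))]; lia.
Qed.

Definition qpart (e : int) (x : qtor) : qtor := filter (fun p => deg1 p.2 == e) x.

Lemma qcoef_qpart e x m : deg1 m = e -> qcoef (qpart e x) m = qcoef x m.
Proof.
move=> me; rewrite /qcoef big_filter_cond; apply: eq_bigl => p.
by case: (p.2 =P m) => [->|]; rewrite ?andbF ?me ?eqxx.
Qed.

Lemma qpart_cat e x y : qpart e (x ++ y) = qpart e x ++ qpart e y.
Proof. exact: filter_cat. Qed.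

Lemma qpart_opp e x : qpart e (qopp x) = qopp (qpart e x).
Proof. by rewrite /qpart /qopp filter_map. Qed.

Lemma qpart_homog x e : qhomog x e -> qpart e x = x.
Proof. by move/all_filterP. Qed.

Lemma qpart_mul x y e1 j1 e2 j2 : qbounded true x e1 j1 -> qbounded true y e2 j2 ->
  qpart (e1 + e2) (qmul x y) = qmul (qpart e1 x) (qpart e2 y).
Proof.
elim: x => [|p x IH] //= /andP[/andP[pe _] hx] hy.
rewrite /qmul allpairs_cons qpart_cat -/(qmul x y) IH // /qpart filter_map /=.
have -> : [seq r <- y | deg1 (tmon_mul p.2 r.2) == e1 + e2]
        = [seq r <- y | (deg1 p.2 == e1) && (deg1 r.2 == e2)].
  apply: eq_in_filter => r /(allP hy) /andP[re _].
  by rewrite deg1_mul (extremal_sum_eq (lo := true) pe re).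
by case: (deg1 p.2 == e1) => /=; rewrite ?filter_pred0.
Qed.

Lemma qpart_X0pow n : qpart 0 (qpow X0 n) = qpow X2inv n.
Proof.
elim: n => [|n IH] //=.
have [_ h0 _] := qcorner_X0 true; have [_ h _] := qcorner_pow n (qcorner_X0 true).
by have := qpart_mul h0 h; rewrite /= mul0rn addr0 => ->; rewrite IH.
Qed.

Lemma qpart_stdmon c d : qpart c (stdmon c d) =
  qmul (qhalf (- (c * d))) (qmul (qpow X3 (posp (- c)))
    (qmul (qpow X1 (posp c)) (qmul (qpow X2 (posp d)) (qpow X2inv (posp (- d)))))).
Proof.
have [_ h3 _] := qcorner_pow (posp (- c)) (qcorner_X3 true).
have [_ h1 _] := qcorner_pow (posp c) (qcorner_X1 true).
have [_ h2 _] := qcorner_pow (posp d) (qcorner_X2 true).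
have [_ h0 _] := qcorner_pow (posp (- d)) (qcorner_X0 true).
have [_ hs _] := qcorner_qhalf true (- (c * d)).
rewrite -[X in qpart X _](_ : 0 + ((-1) *+ posp (- c) + (1 *+ posp c + (0 *+ posp d
  + 0 *+ posp (- d)))) = c); last first.
  by rewrite !mul0rn mulNrn !add0r addr0 natz; move: (posp_cases c) (posp_cases (- c)); lia.
rewrite (qpart_mul hs (qbounded_mul h3 (qbounded_mul h1 (qbounded_mul h2 h0)))).
rewrite (qpart_mul h3 (qbounded_mul h1 (qbounded_mul h2 h0))).
rewrite (qpart_mul h1 (qbounded_mul h2 h0)) (qpart_mul h2 h0).
rewrite [in qpart _ (qpow X0 _)]mul0rn qpart_X0pow.
by rewrite !qpart_homog ?qhomog_pow ?qhomog_X1 ?qhomog_X2 ?qhomog_X3.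
Qed.

Lemma qpart_X4 : qpart (-1) X4 = qmul X2inv (qmul (qhalf 1) X3).
Proof. by vm_compute. Qed.

Lemma qpart_X4_stdmon (a b : int) : a <= 0 -> b <= 0 ->
  qmul (qhalf (- (a - b))) (qmul (qpart (-1) X4) (qpart a (stdmon a b))) =
  qpart (a - 1) (stdmon (a - 1) (b - 1)).
Proof.
move=> a_le0 b_le0.
have [m ->] : exists m : nat, a = - m%:Z by exists (posp (- a)); case: a a_le0 => [[]|].
have [n ->] : exists n : nat, b = - n%:Z by exists (posp (- b)); case: b b_le0 => [[]|].
rewrite !qpart_stdmon qpart_X4 !opprK.
have -> : - (- m%:Z - 1) = m.+1 by lia.
have -> : - m%:Z - 1 = - m.+1%:Z by lia.
have -> : - (- n%:Z - 1) = n.+1 by lia.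
have -> : - n%:Z - 1 = - n.+1%:Z by lia.
rewrite !posp_neg !qmul1 !qpow_X2inv !qmul_monr /qhalf /X2inv !qmul_monl.
rewrite !qlmulAl (qmul_qlmul_homog _ _ _ qhomog_X3) qrmulAr -[qmul X3 _]/(qpow X3 m.+1).
rewrite /qlmul /qrmul -!map_comp; apply/eq_in_map => -[z [[k i] j]].
move=> /(allP (qhomog_pow m.+1 qhomog_X3)) /eqP /=.
rewrite /deg1 /= mulNrn natz => ->; congr (_, (_, _, _)); ring.
Qed.

Definition X4_stdmon_diff (a b : int) : qtor :=
  qadd (qmul (qhalf (- (a - b))) (qmul X4 (stdmon a b))) (qopp (stdmon (a - 1) (b - 1))).

Lemma qbounded_X4_stdmon_diff lo (a b : int) : b <= 0 ->
  qbounded lo (X4_stdmon_diff a b) (if lo then a - 1 else a - b) (b - 1).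
Proof.
move=> b_le0; have [_ hs _] := qcorner_qhalf lo (- (a - b)).
have [_ h _] := qcorner_stdmon lo a b; have [_ h' _] := qcorner_stdmon lo (a - 1) (b - 1).
have posp_b : (posp (- b))%:Z = - b by move: (posp_cases (- b)); lia.
have posp_b1 : (posp (- (b - 1)))%:Z = 1 - b by move: (posp_cases (- (b - 1))); lia.
apply: qbounded_cat; last apply: qbounded_opp.
  apply: qbounded_le (qbounded_mul hs (qbounded_mul (qbounded_X4 lo) h)) _ _;
    by rewrite /corner; case: (lo) => /=; lia.
by apply: qbounded_le h' _ _; rewrite /corner; case: (lo) => /=; lia.
Qed.

Lemma qcoef_X4_stdmon_diff_low (a b : int) m : a <= 0 -> b <= 0 -> deg1 m = a - 1 ->
  qcoef (X4_stdmon_diff a b) m = 0.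
Proof.
move=> a_le0 b_le0 ma; rewrite -(qcoef_qpart _ ma) qpart_cat qpart_opp.
have [_ hs _] := qcorner_qhalf true (- (a - b)); have [_ h _] := qcorner_stdmon true a b.
rewrite -[X in qpart X (qmul _ _)](_ : 0 + (-1 + a) = a - 1); last by ring.
rewrite (qpart_mul hs (qbounded_mul (qbounded_X4 true) h)) (qpart_mul (qbounded_X4 true) h).
by rewrite qpart_X4_stdmon // qcoef_cat qcoef_opp subrr.
Qed.

Lemma X4_stdmon_diff_support (a b : int) m : b <= 0 ->
  qcoef (X4_stdmon_diff a b) m != 0 ->
  (if 0 < a then a - 1 <= deg1 m else a <= deg1 m) /\ deg1 m <= a - b.
Proof.
move=> b_le0 nz; have [p pV pm] := qcoef_neq0 nz.
have /andP[lo_m _] := allP (qbounded_X4_stdmon_diff true a b_le0) p pV.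
have /andP[hi_m _] := allP (qbounded_X4_stdmon_diff false a b_le0) p pV.
rewrite pm /= in lo_m hi_m; split; last by rewrite -lerN2.
case: ifP => // /negbT; rewrite -leNgt => a_le0.
rewrite le_eqVlt in lo_m; case/orP: lo_m => [/eqP/esym ma|]; last by lia.
by move: nz; rewrite qcoef_X4_stdmon_diff_low ?eqxx.
Qed.

Definition stdcomb_keys (L : stdcomb) : seq ((int * int) * int) :=
  undup [seq (e.1, e.2.1) | e <- L].

Lemma stdcomb_coef_key L cd k : stdcomb_coef L cd k != 0 -> (cd, k) \in stdcomb_keys L.
Proof.
apply: contraR => /negbTE notkey; rewrite /stdcomb_coef big1_seq // => e /andP[ek eL].
case/andP: ek => /eqP ecd /eqP ek; move: notkey.
by rewrite mem_undup -ecd -ek map_f.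
Qed.

Lemma qcoef_stdcomb_val L n i j :
  qcoef (stdcomb_val L) (n, i, j) = \sum_(k <- stdcomb_keys L)
    stdcomb_coef L k.1 k.2 * qcoef (stdmon k.1.1 k.1.2) (n - k.2, i, j).
Proof.
rewrite /qcoef /stdcomb_val big_flatten big_map /=.
under eq_bigr do rewrite -/(qcoef _ _) qcoef_shift.
rewrite (@big_partition_seq _ _ _ L (fun e => (e.1, e.2.1)) (stdcomb_keys L) _
  (undup_uniq _)); last first.
  by move=> e eL; rewrite mem_undup map_f.
apply: eq_bigr => -[cd k] _; rewrite /stdcomb_coef big_distrl /=.
apply: eq_big => [e|e /eqP[<- <-]] //; by rewrite xpair_eqE.
Qed.

Definition corner_key (lo : bool) (cd : int * int) : int *l int :=
  (orient lo (corner lo cd.1 cd.2), cd.2).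

Lemma stdmon_coef_at_corner lo c d c' d' n :
  (corner_key lo (c, d) <= corner_key lo (c', d'))%O ->
  qcoef (stdmon c' d') (n, corner lo c d, d) != 0 -> (c', d') = (c, d).
Proof.
rewrite lexi_pair /= => /andP[le1 /implyP le2] /qcoef_neq0 [p pE pm].
have [_ /allP /(_ p pE) /andP[ge1 ge2] _] := qcorner_stdmon lo c' d'.
rewrite pm /deg1 /deg2 /= in ge1 ge2.
have ed : d' = d by apply/eqP; rewrite eq_le ge2 le2.
move: le1 ge1; rewrite ed /corner; case: (lo) => /= *; congr pair; lia.
Qed.

Lemma stdcomb_val_corner lo L c d : stdcomb_occurs L (c, d) ->
  exists c0 d0 n, orient lo (corner lo c0 d0) <= orient lo (corner lo c d) /\
    qcoef (stdcomb_val L) (n, corner lo c0 d0, d0) != 0.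
Proof.
case=> k nz; set O := [seq key <- stdcomb_keys L | stdcomb_coef L key.1 key.2 != 0].
have kO : ((c, d), k) \in O by rewrite mem_filter nz stdcomb_coef_key.
have [[[c0 d0] k0] k0O k0min] := seq_argmin (fun key => corner_key lo key.1) kO.
move: (k0O); rewrite mem_filter => /andP[nz0 k0keys].
have [n0 n0E] := qcorner_coef (qcorner_stdmon lo c0 d0).
exists c0, d0, (k0 + n0); split; first by have := k0min _ kO; rewrite lexi_pair => /andP[].
rewrite qcoef_stdcomb_val (bigD1_seq _ k0keys (undup_uniq _)) /=.
rewrite (addrC k0 n0) addrK n0E eqxx mulr1.
rewrite big1_seq ?addr0 // => -[[c1 d1] k1] /andP[k1_ne k1keys] /=.
have [->|nz1] := eqVneq (stdcomb_coef L (c1, d1) k1) 0; first by rewrite mul0r.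
have [->|nzE] := eqVneq (qcoef (stdmon c1 d1) (n0 + k0 - k1, corner lo c0 d0, d0)) 0.
  by rewrite mulr0.
have k1O : ((c1, d1), k1) \in O by rewrite mem_filter nz1.
case: (stdmon_coef_at_corner (k0min _ k1O) nzE) => ec1 ed1.
move: nzE k1_ne; rewrite ec1 ed1 n0E pnatr_eq0 eqb0 negbK => /eqP shift.
by rewrite (_ : k1 = k0) ?eqxx //; lia.
Qed.

Theorem lemma4p6 (a b : int) (hb : b <= 0) (L : stdcomb) :
  qeq (stdcomb_val L)
      (qadd (qmul (qhalf (- (a - b))) (qmul X4 (stdmon a b)))
            (qopp (stdmon (a - 1) (b - 1)))) ->
  forall c d : int, stdcomb_occurs L (c, d) ->
    (if 0 < a then a - 1 <= c else a <= c) /\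
    (if 0 <= d then c <= a - b else c - d <= a - b).
Proof.
move=> hL c d occ.
have support m : qcoef (stdcomb_val L) m != 0 ->
    (if 0 < a then a - 1 <= deg1 m else a <= deg1 m) /\ deg1 m <= a - b.
  by rewrite hL; apply: X4_stdmon_diff_support.
split.
- have [c0 [d0 [n [le_c /support [lo_c _]]]]] := stdcomb_val_corner true occ.
  by move: le_c lo_c; rewrite /= /deg1 /=; case: ifP => _; lia.
- have [c0 [d0 [n [le_c /support [_ hi_c]]]]] := stdcomb_val_corner false occ.
  move: le_c hi_c; rewrite /= /deg1 /corner /=.
  by move: (posp_cases (- d)); case: ifP => _; lia.
Qed.
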